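(* Let $\{\xi_{pq}:\mathbf A_p\Rightarrow\mathbf A_q: p\preceq q\text{ in }\mathbf I\}$ be a semilattice directed system of metamorphisms of algebras of type $\tau$ (with $\mathbf I$ having a least element if $\tau$ has constants) and let $\mathbf A$ be its Płonka sum. For each $n$-ary symbol $\sigma$ and $0\le i\le n$ define $a\odot^\sigma_i b:=\xi^{\sigma i}_{ps}(a)$ for $a\in A_p$, $b\in A_q$, $s:=p\vee q$. Then $\sigma\mapsto\langle\odot^\sigma_0,\dots,\odot^\sigma_n\rangle$ is a partition system for $\mathbf A$; the classes of the common equivalence $\equiv_\odot$ are exactly the sets $A_p$, with $a\preceq_\odot b$ iff $p\preceq q$ for $a\in A_p,b\in A_q$; and the directed system induced by this partition system (via $\xi'^{\sigma i}_{pq}(a)=a\odot^\sigma_i b$ for any $b\in A_q$) coincides with the given one, i.e. $a\odot^\sigma_i b=\xi^{\sigma i}_{pq}(a)$ for $p\preceq q$, $a\in A_p$, $b\in A_q$.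
   Context: A left normal band on a set $A$ is a binary operation $\odot$ with $a\odot a=a$, $a\odot(b\odot c)=(a\odot b)\odot c$, $a\odot(b\odot c)=a\odot(c\odot b)$. Put $a\preceq_\odot b\iff b\odot a=b$, and $a\equiv_\odot b$ iff $a\preceq_\odot b$ and $b\preceq_\odot a$. Left normal bands $\odot,\otimes$ are homotactic if $\preceq_\odot=\preceq_\otimes$. For an algebra $\mathbf A$ of type $\tau$, a partition system assigns to each $n$-ary symbol $\sigma$ (constants: $n=0$) a tuple $\langle\odot^\sigma_0,\dots,\odot^\sigma_n\rangle$ of pairwise homotactic left normal bands (homotactic across all $\sigma$) such that for all $a_i,b$: if $n\ge1$, $\sigma^{\mathbf A}(a_1,\dots,a_n)\odot^\sigma_0b=\sigma^{\mathbf A}(a_1\odot^\sigma_1b,\dots,a_n\odot^\sigma_nb)$; and $b\odot^\sigma_0\sigma^{\mathbf A}(a_1,\dots,a_n)=b\odot^\sigma_0a_1\odot^\sigma_0\cdots\odot^\sigma_0a_n$ (for constants $\omega$: $b\odot^\omega_0\omega^{\mathbf A}=b$). A metamorphism $f:\mathbf A\Rightarrow\mathbf B$ assigns to each $n$-ary $\sigma$ maps $f^{\sigma0},\dots,f^{\sigma n}:A\to B$ with $f^{\sigma0}(\sigma^{\mathbf A}(a_1,\dots,a_n))=\sigma^{\mathbf B}(f^{\sigma1}(a_1),\dots,f^{\sigma n}(a_n))$; composition is componentwise. A semilattice directed system of metamorphisms over a join-semilattice $\mathbf I=\langle I,\vee\rangle$ (order $\preceq$) is a family of pairwise disjoint algebras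 $\mathbf A_p$ with metamorphisms $\xi_{pq}:\mathbf A_p\Rightarrow\mathbf A_q$ ($p\preceq q$), $\xi_{pp}$ identity, $\xi_{qr}\circ\xi_{pq}=\xi_{pr}$. Its Płonka sum is the algebra on $\biguplus_pA_p$ with $\sigma(a_1,\dots,a_n):=\sigma^{\mathbf A_q}(\xi^{\sigma1}_{p_1q}(a_1),\dots,\xi^{\sigma n}_{p_nq}(a_n))$ for $a_i\in A_{p_i}$, $q=p_1\vee\dots\vee p_n$, and $\omega:=\omega^{\mathbf A_\bot}$ for constants, $\bot$ the least element of $\mathbf I$. *)

From mathcomp Require Import all_boot all_order.
Import Order.TTheory.
Local Open Scope order_scope.

(* Tuples <.._0,...,.._n> indexed by 'I_(ar s).+1 : index ord0 is component 0,
   index (lift ord0 k) is component k+1 (for argument k : 'I_(ar s)). *)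

Section Bands.
Variable X : Type.
Implicit Types (f g : X -> X -> X).

Definition left_normal_band f :=
  [/\ forall a, f a a = a,
      forall a b c, f a (f b c) = f (f a b) c &
      forall a b c, f a (f b c) = f a (f c b)].

Definition bprec f (a b : X) : Prop := f b a = b.
Definition bequiv f (a b : X) : Prop := bprec f a b /\ bprec f b a.
Definition homotactic f g := forall a b, bprec f a b <-> bprec g a b.
End Bands.

Section PartitionSystem.
Variables (Sym : Type) (ar : Sym -> nat) (X : Type).
Variable opX : forall s, ('I_(ar s) -> X) -> X.
Variable band : forall s, 'I_(ar s).+1 -> X -> X -> X.

Definition partition_system : Prop :=
  [/\ (forall s i, left_normal_band X (band s i)),
      (forall s i t j, homotactic X (band s i) (band t j)),
      (forall s (a : 'I_(ar s) -> X) (b : X), (0 < ar s)%N ->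
          band s ord0 (opX s a) b = opX s (fun k => band s (lift ord0 k) (a k) b)) &
      (forall s (a : 'I_(ar s) -> X) (b : X),
          band s ord0 b (opX s a) = foldl (band s ord0) b [seq a k | k <- enum 'I_(ar s)])].
End PartitionSystem.

Section Plonka.
Variables (d : Order.disp_t) (I : joinSemilatticeType d).

(* join of a finite family of indices; for the empty family, the supplied
   least element (only needed when the family is empty, i.e. for constants) *)
Definition join_idx (n : nat) (ps : 'I_n -> I) (b : n = 0 -> I) : I :=
  match n as m return ('I_m -> I) -> (m = 0 -> I) -> I with
  | 0 => fun _ b => b erefl
  | m.+1 => fun ps _ => foldr (fun i acc => ps i `|` acc) (ps ord0) (enum 'I_m.+1)
  end ps b.

Lemma join_idx_ub n (ps : 'I_n -> I) b i : ps i <= join_idx n ps b.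
Proof.
case: n ps b i => [|m] ps b i; first by case: i.
rewrite /join_idx.
have : i \in enum 'I_m.+1 by rewrite mem_enum.
elim: (enum 'I_m.+1) => [//|j s IH] /=; rewrite in_cons => /orP [/eqP ->|/IH H].
  exact: leUl.
exact: le_trans H (leUr _ _).
Qed.

Variables (Sym : Type) (ar : Sym -> nat).
Variable A : I -> Type.
Variable op : forall p s, ('I_(ar s) -> A p) -> A p.
Variable xi : forall p q, p <= q -> forall s, 'I_(ar s).+1 -> A p -> A q.
Variable hbot : forall s, ar s = 0 -> {b : I | forall p, b <= p}.

Definition plonka_op s (a : 'I_(ar s) -> {p : I & A p}) : {p : I & A p} :=
  let ps := fun k => tag (a k) in
  let b := fun e => sval (hbot s e) in
  let q := join_idx (ar s) ps b in
  existT A q (op q s (fun k => xi (ps k) q (join_idx_ub (ar s) ps b k)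
                               s (lift ord0 k) (tagged (a k)))).

Definition plonka_band s (i : 'I_(ar s).+1) (x y : {p : I & A p}) : {p : I & A p} :=
  existT A (tag x `|` tag y) (xi (tag x) (tag x `|` tag y) (leUl (tag x) (tag y)) s i (tagged x)).
End Plonka.

From Pilot Require Import Defs.
From mathcomp Require Import all_boot all_order.
From Stdlib Require Import Eqdep_dec FunctionalExtensionality.
Import Order.TTheory.
Local Open Scope order_scope.

(* Each band operation moves its left argument up to the join of the two
   indices, so the band laws reduce to identities between joins in I together
   with xi_pp = id and xi_qr o xi_pq = xi_pr; in particular b (.) a = b exactly
   when the index of a lies below that of b.  Compatibility with the operations
   comes from the metamorphism property of xi: joining q to the join of the
   indices p_k is the same as joining q to each p_k. *)

Section JoinIndex.
Local Set Implicit Arguments.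
Local Unset Strict Implicit.
Variables (d : Order.disp_t) (I : joinSemilatticeType d).

Lemma join_idx_lub n (ps : 'I_n -> I) b u :
  (forall e : n = 0, b e <= u) -> (forall i, ps i <= u) -> join_idx d I n ps b <= u.
Proof.
case: n ps b => [|m] ps b hb hps; first exact: hb.
rewrite /join_idx; elim: (enum 'I_m.+1) => [|j s IH] /=; first exact: hps.
by rewrite leUx hps IH.
Qed.

Lemma join_idx_joinr n (ps : 'I_n -> I) b b' q : (0 < n)%N ->
  join_idx d I n ps b `|` q = join_idx d I n (fun k => ps k `|` q) b'.
Proof.
move=> n_gt0; apply: le_anti; apply/andP; split; last first.
  apply: join_idx_lub => [e0|k]; first by rewrite e0 in n_gt0.
  by apply: leU2 => //; apply: join_idx_ub.
rewrite leUx; apply/andP; split.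
  apply: join_idx_lub => [e0|k]; first by rewrite e0 in n_gt0.
  exact: le_trans (leUl _ q) (join_idx_ub _ _ _ _ _ k).
exact: le_trans (leUr q (ps (Ordinal n_gt0))) (join_idx_ub _ _ _ _ _ (Ordinal n_gt0)).
Qed.

Lemma foldl_join_le (r u : I) (s : seq I) :
  (foldl Order.join r s <= u) = (r <= u) && all (fun x => x <= u) s.
Proof. by elim: s r => [|x s IH] r /=; rewrite ?andbT // IH leUx andbA. Qed.

Lemma le_foldl_join (r : I) (s : seq I) : r <= foldl Order.join r s.
Proof. by have /andP[] := eqbLR (foldl_join_le r _ s) (lexx _). Qed.

Lemma foldl_join_idx n (ps : 'I_n -> I) b q : (forall e : n = 0, b e <= q) ->
  foldl Order.join q [seq ps k | k <- enum 'I_n] = q `|` join_idx d I n ps b.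
Proof.
move=> hb; set F := foldl _ _ _.
have /andP[q_le_F /allP ps_le_F] := eqbLR (foldl_join_le q F _) (lexx F).
apply: le_anti; apply/andP; split.
  rewrite foldl_join_le leUl /=; apply/allP => _ /mapP[k _ ->].
  exact: le_trans (join_idx_ub _ _ _ _ _ k) (leUr _ _).
rewrite leUx q_le_F; apply: join_idx_lub => [e|k].
  exact: le_trans (hb e) q_le_F.
by apply: ps_le_F; rewrite map_f ?mem_enum.
Qed.
End JoinIndex.

Section PlonkaSum.
Variables (d : Order.disp_t) (I : joinSemilatticeType d) (Sym : Type) (ar : Sym -> nat).
Variables (A : I -> Type) (op : forall p s, ('I_(ar s) -> A p) -> A p).
Variable xi : forall p q, p <= q -> forall s, 'I_(ar s).+1 -> A p -> A q.
Variable hbot : forall s, ar s = 0 -> {b : I | forall p, b <= p}.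
Hypothesis xi_meta : forall p q (h : p <= q) s (a : 'I_(ar s) -> A p),
  xi p q h s ord0 (op p s a) = op q s (fun k => xi p q h s (lift ord0 k) (a k)).
Hypothesis xi_id : forall p (h : p <= p) s i (a : A p), xi p p h s i a = a.
Hypothesis xi_comp : forall p q r (hpq : p <= q) (hqr : q <= r) (hpr : p <= r) s i a,
  xi q r hqr s i (xi p q hpq s i a) = xi p r hpr s i a.

Local Set Implicit Arguments.
Local Unset Strict Implicit.

Local Notation T := {p : I & A p}.
Local Notation band := (plonka_band d I Sym ar A xi).
Local Notation plonka_op := (plonka_op d I Sym ar A op xi hbot).

Lemma xi_compE p q r (hpq : p <= q) (hqr : q <= r) s i (a : A p) :
  xi q r hqr s i (xi p q hpq s i a) = xi p r (le_trans hpq hqr) s i a.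
Proof. exact: xi_comp. Qed.

Lemma existT_xi_congr p r r' (hr : p <= r) (hr' : p <= r') s i (a : A p) :
  r = r' -> existT A r (xi p r hr s i a) = existT A r' (xi p r' hr' s i a).
Proof. by move=> er; subst r'; rewrite (bool_irrelevance hr hr'). Qed.

Lemma existT_xi_refl p r (hr : p <= r) s i (a : A p) :
  r = p -> existT A r (xi p r hr s i a) = existT A p a.
Proof. by move=> er; rewrite (existT_xi_congr hr (lexx p)) // xi_id. Qed.

Lemma existT_op_congr s r r' (F : 'I_(ar s) -> A r) (F' : 'I_(ar s) -> A r') :
  r = r' -> (forall k, existT A r (F k) = existT A r' (F' k)) ->
  existT A r (op r s F) = existT A r' (op r' s F').
Proof.
move=> er; subst r' => eF; congr (existT A r (op r s _)).
apply: functional_extensionality => k.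
apply: inj_pair2_eq_dec (eF k) => u v.
by case: (eqVneq u v) => [->|/eqP]; [left|right].
Qed.

Lemma plonka_bandE s i p q (h : p <= q) (a : A p) (b : A q) :
  band s i (existT A p a) (existT A q b) = existT A q (xi p q h s i a).
Proof. exact/existT_xi_congr/join_r. Qed.

Lemma plonka_band_xi s i p r (h : p <= r) (a : A p) y :
  band s i (existT A r (xi p r h s i a)) y =
  existT A (r `|` tag y) (xi p _ (le_trans h (leUl r (tag y))) s i a).
Proof. by rewrite /plonka_band /= xi_compE. Qed.

Lemma plonka_band_left_normal s i : left_normal_band T (band s i).
Proof.
split.
- by move=> [p a]; apply/existT_xi_refl/joinxx.
- move=> [p a] [q b] [r c]; rewrite plonka_band_xi.
  by apply: existT_xi_congr; rewrite /= joinA.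
- by move=> [p a] [q b] [r c]; apply: existT_xi_congr; rewrite /= (joinC q).
Qed.

Lemma bprec_plonka_band s i (x y : T) : bprec T (band s i) x y <-> tag x <= tag y.
Proof.
case: x y => [p a] [q b]; rewrite /bprec /=; split.
  by move/(congr1 tag) => /= <-; apply: leUr.
by move=> le_pq; apply/existT_xi_refl/join_l.
Qed.

Lemma bequiv_plonka_band s i (x y : T) : bequiv T (band s i) x y <-> tag x = tag y.
Proof.
split=> [[/bprec_plonka_band le_xy /bprec_plonka_band le_yx]|e_xy].
  by apply: le_anti; rewrite le_xy le_yx.
by split; apply/bprec_plonka_band; rewrite e_xy.
Qed.

Lemma plonka_band_homotactic s i t j : homotactic T (band s i) (band t j).
Proof. by move=> x y; split=> /bprec_plonka_band le_xy; apply/bprec_plonka_band. Qed.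

Lemma plonka_band_opl s (a : 'I_(ar s) -> T) y : (0 < ar s)%N ->
  band s ord0 (plonka_op s a) y = plonka_op s (fun k => band s (lift ord0 k) (a k) y).
Proof.
move=> ar_gt0; rewrite /Defs.plonka_op /plonka_band /= xi_meta.
apply: existT_op_congr => [|k]; first exact: join_idx_joinr.
by rewrite !xi_compE; apply/existT_xi_congr/join_idx_joinr.
Qed.

Lemma foldl_plonka_band s i (l : seq T) p (a : A p) :
  foldl (band s i) (existT A p a) l =
  existT A (foldl Order.join p (map tag l)) (xi p _ (le_foldl_join p _) s i a).
Proof.
elim: l p a => [|y l IH] p a /=; first by rewrite xi_id.
by rewrite IH /plonka_band /= xi_compE; apply: existT_xi_congr.
Qed.

Lemma plonka_band_opr s (a : 'I_(ar s) -> T) y :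
  band s ord0 y (plonka_op s a) = foldl (band s ord0) y [seq a k | k <- enum 'I_(ar s)].
Proof.
case: y => [q b]; rewrite foldl_plonka_band -map_comp; apply: existT_xi_congr.
by apply/esym/foldl_join_idx => e; apply: (svalP (hbot s e)).
Qed.

Lemma plonka_partition_system : partition_system Sym ar T plonka_op band.
Proof.
split; [exact: plonka_band_left_normal | exact: plonka_band_homotactic |
        exact: plonka_band_opl | exact: plonka_band_opr].
Qed.
End PlonkaSum.

Theorem theorem4p6 (d : Order.disp_t) (I : joinSemilatticeType d)
  (Sym : Type) (ar : Sym -> nat)
  (A : I -> Type) (op : forall p s, ('I_(ar s) -> A p) -> A p)
  (xi : forall p q, p <= q -> forall s, 'I_(ar s).+1 -> A p -> A q)
  (hbot : forall s, ar s = 0 -> {b : I | forall p, b <= p})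
  (xi_meta : forall p q (h : p <= q) s (a : 'I_(ar s) -> A p),
      xi p q h s ord0 (op p s a) = op q s (fun k => xi p q h s (lift ord0 k) (a k)))
  (xi_id : forall p (h : p <= p) s i (a : A p), xi p p h s i a = a)
  (xi_comp : forall p q r (hpq : p <= q) (hqr : q <= r) (hpr : p <= r) s i (a : A p),
      xi q r hqr s i (xi p q hpq s i a) = xi p r hpr s i a) :
  let band := plonka_band d I Sym ar A xi in
  [/\ partition_system Sym ar {p : I & A p} (plonka_op d I Sym ar A op xi hbot) band,
      (forall s i (x y : {p : I & A p}), bequiv _ (band s i) x y <-> tag x = tag y),
      (forall s i (x y : {p : I & A p}), bprec _ (band s i) x y <-> tag x <= tag y) &
      (forall s i p q (h : p <= q) (a : A p) (b : A q),
          band s i (existT A p a) (existT A q b) = existT A q (xi p q h s i a))].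
Proof.
split.
- exact: plonka_partition_system.
- exact: bequiv_plonka_band.
- exact: bprec_plonka_band.
- exact: plonka_bandE.
Qed.
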